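(* Let $a\le s\le r$ be positive integers with $s\mid r$, and let $\gamma\in B_a$ (viewed in $B_s\subseteq B_r$ via the standard inclusions). Then $\widehat{\gamma[1,r]^s}=\widehat{\gamma[1,s]^r}$, where the left closure is taken in $B_r$ and the right in $B_s$. Consequently, for a T-link with $r_{k-1}\le s_k\le r_k$ and $s_k\mid r_k$, $$T((r_1,s_1),\dots,(r_{k-1},s_{k-1}),(r_k,s_k))=T((r_1,s_1),\dots,(r_{k-1},s_{k-1}),(s_k,r_k)).$$
   Context: $B_n$ is the braid group on $n$ strands with generators $\sigma_1,\dots,\sigma_{n-1}$; $\widehat\beta$ is the closure; $[1,n]=\sigma_1\sigma_2\cdots\sigma_{n-1}$. A T-link $T((r_1,s_1),\dots,(r_k,s_k))$, with integers $2\le r_1\le\dots\le r_k$ and $s_i>0$, is the closure of $[1,r_1]^{s_1}\cdots[1,r_k]^{s_k}\in B_{r_k}$. *)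

From mathcomp Require Import all_boot.
Set Implicit Arguments. Unset Strict Implicit. Unset Printing Implicit Defensive.

(* A letter (i, true) is sigma_i, (i, false) is sigma_i^{-1}; i >= 1. *)
Definition letter := (nat * bool)%type.
Definition bword := seq letter.

Definition valid (n : nat) (w : bword) : bool :=
  all (fun x : letter => (0 < x.1) && (x.1 < n)) w.

Inductive braid_rel : bword -> bword -> Prop :=
| br_cancel i b : braid_rel [:: (i, b); (i, ~~ b)] [::]
| br_far i j : (i.+1 < j)%N ->
    braid_rel [:: (i, true); (j, true)] [:: (j, true); (i, true)]
| br_braid i :
    braid_rel [:: (i, true); (i.+1, true); (i, true)]
              [:: (i.+1, true); (i, true); (i.+1, true)].

(* markov n w m v : the closure of w in B_n and the closure of v in B_m are
   the same link (equivalence generated by equality in B_n, conjugation,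
   and Markov (de)stabilisation B_n -> B_{n+1}, beta |-> beta sigma_n^{+-1}). *)
Inductive markov : nat -> bword -> nat -> bword -> Prop :=
| mk_refl n w : markov n w n w
| mk_sym n w m v : markov n w m v -> markov m v n w
| mk_trans n w m v p u : markov n w m v -> markov m v p u -> markov n w p u
| mk_rel n u v l r : braid_rel l r ->
    valid n (u ++ l ++ v) -> valid n (u ++ r ++ v) ->
    markov n (u ++ l ++ v) n (u ++ r ++ v)
| mk_conj n u v : valid n (u ++ v) -> markov n (u ++ v) n (v ++ u)
| mk_stab n w b : (0 < n)%N -> valid n w -> markov n w n.+1 (rcons w (n, b)).

(* [1,n] = sigma_1 sigma_2 ... sigma_{n-1} *)
Definition seg (n : nat) : bword := [seq (i, true) | i <- iota 1 n.-1].

Definition bpow (w : bword) (k : nat) : bword := flatten (nseq k w).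

Definition Tword (L : seq (nat * nat)) : bword :=
  flatten [seq bpow (seg p.1) p.2 | p <- L].

Definition Tdata (L : seq (nat * nat)) : bool :=
  [&& L != [::], sorted leq [seq p.1 | p <- L]
    & all (fun p : nat * nat => (2 <= p.1)%N && (0 < p.2)%N) L].

(* T((r_1,s_1),...,(r_k,s_k)) is the closure of Tword L in B_{r_k};
   T-link equality is stated via markov with r_k strands. *)
Definition Tstrands (L : seq (nat * nat)) : nat := last 0%N [seq p.1 | p <- L].

From mathcomp Require Import all_boot zify.
Set Implicit Arguments. Unset Strict Implicit. Unset Printing Implicit Defensive.

(* Write [d_N = [1,N]] and argue by induction on [r/s]. Since
   [d_(M+1)^s = d_M^s sigma_M (sigma_(M-1) ... sigma_(M-s+1))] up to braid moves,
   [s] conjugations and Markov destabilisations turn the closure of [gamma d_(N+s)^s]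
   into that of [gamma d_N^s T], where [T] is the full twist of the top [s] strands
   of [B_N]. Conjugation by [d_N^s] lowers indices by [s], so [T] slides down to the
   full twist [d_s^s] of the bottom [s] strands. Conjugating it to the front and
   applying the induction hypothesis to [d_s^s gamma] gives the closure of
   [gamma d_s^N d_s^s = gamma d_s^(N+s)]. *)

Definition asc (a k : nat) : bword := [seq (i, true) | i <- iota a k].
Definition desc (a k : nat) : bword := rev (asc a k).
Definition shiftw (k : nat) (w : bword) : bword := [seq (x.1 + k, x.2) | x <- w].
Definition within (lo hi : nat) (w : bword) : bool :=
  all (fun x : letter => lo <= x.1 <= hi) w.
Definition positive (w : bword) : bool := all snd w.

Lemma seg_asc n : seg n = asc 1 n.-1. Proof. by []. Qed.

Lemma asc_cat a m k : asc a (m + k) = asc a m ++ asc (a + m) k.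
Proof. by rewrite /asc iotaD map_cat. Qed.

Lemma ascSr a k : asc a k.+1 = rcons (asc a k) (a + k, true).
Proof. by rewrite -addn1 asc_cat -cats1. Qed.

Lemma descS a k : desc a k.+1 = (a + k, true) :: desc a k.
Proof. by rewrite /desc ascSr rev_rcons. Qed.

Lemma segSr n : 0 < n -> seg n.+1 = rcons (seg n) (n, true).
Proof. by case: n => // n _; rewrite !seg_asc ascSr add1n. Qed.

Lemma bpowS w k : bpow w k.+1 = w ++ bpow w k. Proof. by []. Qed.

Lemma bpowD w m k : bpow w (m + k) = bpow w m ++ bpow w k.
Proof. by elim: m => [|m IH] //; rewrite addSn !bpowS IH catA. Qed.

Lemma bpowSr w k : bpow w k.+1 = bpow w k ++ w.
Proof. by rewrite -addn1 bpowD /bpow /= cats0. Qed.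

Lemma rev_bpow w k : rev (bpow w k) = bpow (rev w) k.
Proof. by elim: k => [|k IH] //; rewrite bpowS rev_cat IH bpowSr. Qed.

Lemma shiftw0 w : shiftw 0 w = w.
Proof. by elim: w => [|[i b] w IH] //=; rewrite addn0 IH. Qed.

Lemma shiftw_cat k u v : shiftw k (u ++ v) = shiftw k u ++ shiftw k v.
Proof. exact: map_cat. Qed.

Lemma shiftwD a b w : shiftw a (shiftw b w) = shiftw (b + a) w.
Proof. by elim: w => [|x w IH] //=; rewrite IH addnA. Qed.

Lemma shiftw_bpow k w m : shiftw k (bpow w m) = bpow (shiftw k w) m.
Proof. by elim: m => [|m IH] //; rewrite !bpowS shiftw_cat IH. Qed.

Lemma shiftw_asc k a m : shiftw k (asc a m) = asc (a + k) m.
Proof. by elim: m a => [|m IH] a //=; rewrite IH addSn. Qed.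

Lemma shiftw_desc k a m : shiftw k (desc a m) = desc (a + k) m.
Proof. by rewrite /desc /shiftw map_rev -shiftw_asc. Qed.

Lemma valid_cat n u v : valid n (u ++ v) = valid n u && valid n v.
Proof. exact: all_cat. Qed.

Lemma valid_rev n w : valid n (rev w) = valid n w.
Proof. exact: all_rev. Qed.

Lemma valid_widen n n' w : n <= n' -> valid n w -> valid n' w.
Proof. by move=> le; apply: sub_all => x /andP[-> /=] h; lia. Qed.

Lemma valid_bpow n w k : valid n w -> valid n (bpow w k).
Proof. by move=> h; elim: k => [|k IH] //; rewrite bpowS valid_cat h IH. Qed.

Lemma valid_within n lo hi w : 0 < lo -> hi < n -> within lo hi w -> valid n w.
Proof. by move=> h1 h2; apply: sub_all => x /andP[a b]; apply/andP; lia. Qed.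

Lemma within_asc a k : within a (a + k).-1 (asc a k).
Proof.
by apply/allP => x /mapP[i]; rewrite mem_iota => /andP[h1 h2] -> /=; apply/andP; lia.
Qed.

Lemma within_desc a k : within a (a + k).-1 (desc a k).
Proof. by rewrite /within /desc all_rev; apply: within_asc. Qed.

Lemma within_shiftw lo hi k w :
  within lo hi w -> within (lo + k) (hi + k) (shiftw k w).
Proof.
by rewrite /within /shiftw all_map; apply: sub_all => x /andP[a b] /=; apply/andP; lia.
Qed.

Lemma within_bpow lo hi w k : within lo hi w -> within lo hi (bpow w k).
Proof. by move=> h; elim: k => [|k IH] //; rewrite bpowS /within all_cat; apply/andP. Qed.

Lemma valid_asc n a k : 0 < a -> a + k <= n -> valid n (asc a k).
Proof. by move=> h1 h2; apply: (valid_within _ _ (within_asc a k)); lia. Qed.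

Lemma valid_desc n a k : 0 < a -> a + k <= n -> valid n (desc a k).
Proof. by move=> h1 h2; rewrite /desc valid_rev; apply: valid_asc. Qed.

Lemma valid_seg n m : m <= n -> valid n (seg m).
Proof. by case: m => [|m] h //; rewrite seg_asc; apply: valid_asc => //; lia. Qed.

Lemma positive_cat u v : positive (u ++ v) = positive u && positive v.
Proof. exact: all_cat. Qed.

Lemma positive_shiftw k w : positive (shiftw k w) = positive w.
Proof. by rewrite /positive /shiftw all_map. Qed.

Lemma positive_asc a k : positive (asc a k).
Proof. by rewrite /positive /asc all_map; apply/allP. Qed.

Lemma positive_desc a k : positive (desc a k).
Proof. by rewrite /positive /desc all_rev; apply: positive_asc. Qed.

Lemma positive_bpow w k : positive w -> positive (bpow w k).
Proof. by move=> h; elim: k => [|k IH] //; rewrite bpowS positive_cat h IH. Qed.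

Inductive braid_eq (n : nat) : bword -> bword -> Prop :=
| be_refl w : valid n w -> braid_eq n w w
| be_sym w v : braid_eq n w v -> braid_eq n v w
| be_trans w v u : braid_eq n w v -> braid_eq n v u -> braid_eq n w u
| be_rel u l r v : braid_rel l r -> valid n (u ++ l ++ v) ->
    valid n (u ++ r ++ v) -> braid_eq n (u ++ l ++ v) (u ++ r ++ v).

Section BraidEq.
Variable n : nat.

Lemma braid_eq_valid w v : braid_eq n w v -> valid n w /\ valid n v.
Proof. by elim=> //; clear; tauto. Qed.

Lemma markov_braid_eq w v : braid_eq n w v -> markov n w n v.
Proof.
elim=> {w v} [w _ | w v _ | w v u _ h1 _ h2 | u l r v *].
- exact: mk_refl.
- exact: mk_sym.
- exact: mk_trans h1 h2.
- exact: mk_rel.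
Qed.

Lemma braid_eq_ctx w v x y : braid_eq n w v -> valid n x -> valid n y ->
  braid_eq n (x ++ w ++ y) (x ++ v ++ y).
Proof.
move=> h hx hy; elim: h => {w v} [w hw | w v _ | w v u _ h1 _ h2 | u l r v hr h1 h2].
- by apply: be_refl; rewrite !valid_cat hx hw hy.
- exact: be_sym.
- exact: be_trans h1 h2.
- have e z : x ++ (u ++ z ++ v) ++ y = (x ++ u) ++ z ++ (v ++ y) by rewrite -!catA.
  rewrite !e; apply: be_rel => //; rewrite !valid_cat in h1 h2 *; rewrite hx hy.
  + by case/and3P: h1 => -> -> ->.
  + by case/and3P: h2 => -> -> ->.
Qed.

Lemma braid_eq_catl w v x : braid_eq n w v -> valid n x -> braid_eq n (x ++ w) (x ++ v).
Proof. by move=> h hx; have := braid_eq_ctx h hx (isT : valid n [::]); rewrite !cats0. Qed.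

Lemma braid_eq_catr w v y : braid_eq n w v -> valid n y -> braid_eq n (w ++ y) (v ++ y).
Proof. by move=> h; apply: (braid_eq_ctx (x := [::]) h). Qed.

Lemma braid_eq_rel l r : braid_rel l r -> valid n l -> valid n r -> braid_eq n l r.
Proof. by move=> h; have := @be_rel n [::] l r [::] h; rewrite /= !cats0. Qed.

Lemma braid_rel_rev l r : braid_rel l r ->
  braid_rel (rev l) (rev r) \/ braid_rel (rev r) (rev l).
Proof.
case=> [i b | i j h | i] /=.
- by left; have := br_cancel i (~~ b); rewrite negbK.
- by right; apply: br_far.
- by left; apply: br_braid.
Qed.

Lemma braid_eq_rev w v : braid_eq n w v -> braid_eq n (rev w) (rev v).
Proof.
elim=> {w v} [w hw | w v _ | w v u _ h1 _ h2 | u l r v hr h1 h2].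
- by apply: be_refl; rewrite valid_rev.
- exact: be_sym.
- exact: be_trans h1 h2.
- rewrite !rev_cat -!catA.
  have valid_rev3 z : valid n (u ++ z ++ v) -> valid n (rev v ++ rev z ++ rev u).
    by rewrite -valid_rev !rev_cat catA.
  have [h | h] := braid_rel_rev hr; first exact: be_rel (valid_rev3 _ h1) (valid_rev3 _ h2).
  by apply: be_sym; apply: be_rel (valid_rev3 _ h2) (valid_rev3 _ h1).
Qed.

End BraidEq.

Lemma braid_eq_widen n n' w v : n <= n' -> braid_eq n w v -> braid_eq n' w v.
Proof.
move=> le; elim=> {w v} [w hw | w v _ | w v u _ h1 _ h2 | u l r v hr h1 h2].
- exact/be_refl/(valid_widen le).
- exact: be_sym.
- exact: be_trans h1 h2.
- by apply: be_rel => //; apply: valid_widen le _.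
Qed.

Definition far (i j : nat) : bool := (i.+1 < j) || (j.+1 < i).

Definition inv_letter (x : letter) : letter := (x.1, ~~ x.2).

(* [x^-1 y = x^-1 y x x^-1 = x^-1 x y x^-1 = y x^-1]. *)
Lemma commute_inv_letter n x y :
  braid_eq n [:: x; y] [:: y; x] -> braid_eq n [:: inv_letter x; y] [:: y; inv_letter x].
Proof.
case: x => i b h; have [/and3P[hi hy _] _] := braid_eq_valid h.
set x' := inv_letter (i, b).
have vx' : valid n [:: x'] by rewrite /valid /= andbT.
have e1 : braid_eq n ([:: x'; y] ++ [:: (i, b); x'] ++ [::]) ([:: x'; y] ++ [::] ++ [::]).
  by apply: be_rel; [exact: br_cancel | rewrite /valid /= hi hy | rewrite /valid /= hi hy].
have e2 : braid_eq n ([:: x'] ++ [:: y; (i, b)] ++ [:: x'])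
                     ([:: x'] ++ [:: (i, b); y] ++ [:: x']).
  exact: (braid_eq_ctx (be_sym h) vx' vx').
have e3 : braid_eq n ([::] ++ [:: x'; (i, b)] ++ [:: y; x']) ([::] ++ [::] ++ [:: y; x']).
  apply: be_rel; last by rewrite /valid /= hi hy.
  - by have := br_cancel i (~~ b); rewrite negbK.
  - by rewrite /valid /= hi hy.
by rewrite /= ?cats0 in e1 e2 e3; apply: be_trans (be_sym e1) (be_trans e2 e3).
Qed.

Lemma far_commute n i b j c : far i j -> 0 < i < n -> 0 < j < n ->
  braid_eq n [:: (i, b); (j, c)] [:: (j, c); (i, b)].
Proof.
wlog [-> ->] : i b j c / b /\ c.
  move=> pos f hi hj.
  have pos_l b' : braid_eq n [:: (i, b'); (j, true)] [:: (j, true); (i, b')].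
    case: b'; first exact: pos.
    exact: (commute_inv_letter (pos i true j true (conj isT isT) f hi hj)).
  case: c; first exact: pos_l.
  exact/be_sym/(commute_inv_letter (x := (j, true)))/be_sym/pos_l.
move=> f hi hj.
have v1 : valid n [:: (i, true); (j, true)] by rewrite /valid /= hi hj.
have v2 : valid n [:: (j, true); (i, true)] by rewrite /valid /= hi hj.
case/orP: f => f; first exact: braid_eq_rel (br_far f) v1 v2.
exact/be_sym/(braid_eq_rel (br_far f) v2 v1).
Qed.

Definition far_words (w v : bword) : bool :=
  all (fun x : letter => all (fun y : letter => far x.1 y.1) v) w.

Lemma far_commute_letter n x v : valid n (x :: v) ->
  all (fun y : letter => far x.1 y.1) v -> braid_eq n (x :: v) (rcons v x).
Proof.
case: x => i b; elim: v => [|[j c] v IH] hv hf; first exact: be_refl.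
move: hv hf; rewrite /valid /= => /and3P[hi hj hv] /andP[f hf].
apply: be_trans (braid_eq_catr (far_commute b c f hi hj) hv) _.
by apply: (braid_eq_catl (x := [:: (j, c)])); [apply: IH; rewrite /valid /= ?hi | rewrite /valid /= hj].
Qed.

Lemma far_commute_words n w v : valid n w -> valid n v -> far_words w v ->
  braid_eq n (w ++ v) (v ++ w).
Proof.
elim: w => [|x w IH] hw hv hf /=; first by rewrite cats0; apply: be_refl.
move: hw hf; rewrite /valid /= => /andP[hx hw] /andP[fx hf].
have vx : valid n [:: x] by rewrite /valid /= hx.
apply: be_trans (braid_eq_catl (IH hw hv hf) vx) _.
rewrite -cat_rcons -cat1s catA; apply: braid_eq_catr hw.
by apply: far_commute_letter fx; rewrite /valid /= hx.
Qed.

Lemma far_within lo1 hi1 lo2 hi2 w v : within lo1 hi1 w -> within lo2 hi2 v ->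
  (hi1.+1 < lo2) || (hi2.+1 < lo1) -> far_words w v.
Proof.
move=> hw hv h; apply/allP => x /(allP hw) /andP[x1 x2].
apply/allP => y /(allP hv) /andP[y1 y2]; rewrite /far.
by case/orP: h => h; apply/orP; [left | right]; lia.
Qed.

Lemma asc_conj_letter n b L j : 0 < b -> b <= j < b + L -> b + L < n ->
  braid_eq n (rcons (asc b L.+1) (j, true)) ((j.+1, true) :: asc b L.+1).
Proof.
move=> hb /andP[h1 h2] hn; set m := b + L - j - 1.
have -> : asc b L.+1 = asc b (j - b) ++ [:: (j, true); (j.+1, true)] ++ asc j.+2 m.
  have eL : L.+1 = (j - b) + m.+2 by rewrite /m; lia.
  by rewrite eL asc_cat (_ : b + (j - b) = j) //; lia.
set A := asc b (j - b); set B := asc j.+2 m.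
have iA : within b j.-1 A by have := within_asc b (j - b); congr within; lia.
have iB : within j.+2 (j.+2 + m).-1 B by apply: within_asc.
have vA : valid n A by apply: valid_within iA; lia.
have vB : valid n B by apply: valid_within iB; rewrite /m; lia.
have vjj : valid n [:: (j, true); (j.+1, true)] by rewrite /valid /=; lia.
have e1 : braid_eq n (A ++ [:: (j, true); (j.+1, true)] ++ (B ++ [:: (j, true)]))
                     (A ++ [:: (j, true); (j.+1, true)] ++ ([:: (j, true)] ++ B)).
  apply: braid_eq_catl => //; apply: braid_eq_catl => //.
  apply: far_commute_words => //; first by rewrite /valid /=; lia.
  by apply: far_within iB (_ : within j j _) _; rewrite /within /= ?leqnn //; lia.
have e2 : braid_eq n (A ++ [:: (j, true); (j.+1, true); (j, true)] ++ B)
                     (A ++ [:: (j.+1, true); (j, true); (j.+1, true)] ++ B).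
  by apply: be_rel; [exact: br_braid | | ]; rewrite !valid_cat vA vB /valid /=; lia.
have e3 : braid_eq n ((A ++ [:: (j.+1, true)]) ++ [:: (j, true); (j.+1, true)] ++ B)
                     (([:: (j.+1, true)] ++ A) ++ [:: (j, true); (j.+1, true)] ++ B).
  apply: braid_eq_catr; last by rewrite valid_cat vjj vB.
  apply: far_commute_words => //; first by rewrite /valid /=; lia.
  by apply: far_within iA (_ : within j.+1 j.+1 _) _; rewrite /within /= ?leqnn //; lia.
rewrite -!catA /= in e1 e2 e3; rewrite -cats1 -!catA /=.
exact: be_trans e1 (be_trans e2 e3).
Qed.

Lemma asc_conj n b L Y : 0 < b -> b + L < n -> positive Y -> within b (b + L).-1 Y ->
  braid_eq n (asc b L.+1 ++ Y) (shiftw 1 Y ++ asc b L.+1).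
Proof.
move=> hb hn; have va : valid n (asc b L.+1) by apply: valid_asc => //; lia.
elim: Y => [|[j c] Y IH] /=; first by rewrite cats0; move=> *; apply: be_refl.
move=> /andP[/= -> pY] /andP[/andP[h1 h2] hY].
have vY : valid n Y by apply: valid_within hY; lia.
have e1 := braid_eq_catr (asc_conj_letter (j := j) hb _ hn) vY.
rewrite cat_rcons in e1; apply: be_trans (e1 _) _; first by apply/andP; lia.
rewrite addn1; apply: (braid_eq_catl (x := [:: (j.+1, true)]) (IH pY hY)).
by rewrite /valid /=; lia.
Qed.

Lemma asc_pow_conj n b L Y k : 0 < b -> b + L < n -> positive Y ->
  within b (b + L - k) Y ->
  braid_eq n (bpow (asc b L.+1) k ++ Y) (shiftw k Y ++ bpow (asc b L.+1) k).
Proof.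
move=> hb hn pY; have va : valid n (asc b L.+1) by apply: valid_asc => //; lia.
elim: k => [|k IH] hY.
  by rewrite shiftw0 /= cats0; apply: be_refl; apply: valid_within hY; lia.
have hY' : within b (b + L - k) Y by apply: sub_all hY => x /andP[? ?]; apply/andP; lia.
have vb : valid n (bpow (asc b L.+1) k) by apply: valid_bpow.
rewrite bpowS -catA; apply: be_trans (braid_eq_catl (IH hY') va) _.
rewrite !catA; apply: braid_eq_catr vb.
have -> : shiftw k.+1 Y = shiftw 1 (shiftw k Y) by rewrite shiftwD addn1.
apply: asc_conj; rewrite ?positive_shiftw //.
by have := within_shiftw k hY; apply: sub_all => x /andP[? ?]; apply/andP; lia.
Qed.

Lemma seg_sandwich p :
  braid_eq p.+3 ((p.+2, true) :: rcons (seg p.+2) (p.+2, true))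
                (seg p.+2 ++ [:: (p.+2, true); (p.+1, true)]).
Proof.
rewrite segSr // seg_asc /= -!cats1 -!catA /=; set A := asc 1 p.
have iA : within 1 p A by have := within_asc 1 p; rewrite add1n.
have vA : valid p.+3 A by apply: valid_within iA => //; lia.
have e1 : braid_eq p.+3 (([:: (p.+2, true)] ++ A) ++ [:: (p.+1, true); (p.+2, true)])
                        ((A ++ [:: (p.+2, true)]) ++ [:: (p.+1, true); (p.+2, true)]).
  apply: braid_eq_catr; last by rewrite /valid /=; lia.
  apply: far_commute_words => //; first by rewrite /valid /=; lia.
  by apply: (@far_within p.+2 p.+2 1 p) => //; rewrite /within /= leqnn.
have e2 : braid_eq p.+3 (A ++ [:: (p.+1, true); (p.+2, true); (p.+1, true)] ++ [::])
                        (A ++ [:: (p.+2, true); (p.+1, true); (p.+2, true)] ++ [::]).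
  by apply: be_rel; [exact: br_braid | |]; rewrite !valid_cat vA /valid /=; lia.
rewrite cats0 -!catA /= in e1 e2.
exact: be_trans e1 (be_sym e2).
Qed.

Lemma desc_seg a k : 0 < a ->
  braid_eq (a + k).+1 (desc a.+1 k ++ seg (a + k).+1) (seg (a + k) ++ desc a k.+1).
Proof.
move=> ha; case: k => [|k].
  rewrite /= addn0 segSr // descS addn0 -cats1; apply: be_refl.
  by rewrite valid_cat valid_seg //= /valid /=; lia.
case: a ha => // a _; set p := a + k.
have -> : a.+1 + k.+1 = p.+2 by rewrite /p; lia.
rewrite segSr // !descS !addSn addnS -/p.
have -> : desc a.+2 k = shiftw 1 (desc a.+1 k) by rewrite shiftw_desc addn1.
set Y := desc a.+1 k.
have iY : within a.+1 (a.+1 + k).-1 Y by apply: within_desc.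
have vY : valid p.+3 Y by apply: valid_within iY => //; rewrite /p; lia.
have vtop : valid p.+3 [:: (p.+2, true)] by rewrite /valid /=; lia.
have vS : valid p.+3 (seg p.+2) by apply: valid_seg.
have f1 : braid_eq p.+3 ([:: (p.+2, true)] ++ (shiftw 1 Y ++ seg p.+2) ++ [:: (p.+2, true)])
                        ([:: (p.+2, true)] ++ (seg p.+2 ++ Y) ++ [:: (p.+2, true)]).
  apply: braid_eq_ctx => //; apply: be_sym; rewrite seg_asc.
  apply: (asc_conj (L := p)); [by [] | lia | exact: positive_desc |].
  by apply: sub_all iY => x /andP[h1 h2]; apply/andP; rewrite /p; lia.
have f2 : braid_eq p.+3 (([:: (p.+2, true)] ++ seg p.+2) ++ (Y ++ [:: (p.+2, true)]))
                        (([:: (p.+2, true)] ++ seg p.+2) ++ ([:: (p.+2, true)] ++ Y)).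
  apply: braid_eq_catl; last by rewrite valid_cat vtop vS.
  apply: far_commute_words => //.
  by apply: far_within iY (_ : within p.+2 p.+2 _) _; rewrite /within /= ?leqnn //; lia.
have f3 := braid_eq_catr (seg_sandwich p) vY.
move: f1 f2 f3; move: (seg p.+2) => S f1 f2 f3.
rewrite -!cats1 !cat_cons -!catA !cat1s in f1 f2 f3 *.
exact: be_trans f1 (be_trans f2 f3).
Qed.

Lemma bpow_segS M k : k <= M -> 0 < M ->
  braid_eq M.+1 (bpow (seg M.+1) k) (bpow (seg M) k ++ desc (M - k).+1 k).
Proof.
move=> + hM; elim: k => [|k IH] hk; first exact: be_refl.
have vs : valid M.+1 (seg M.+1) by apply: valid_seg.
rewrite bpowSr; apply: be_trans (braid_eq_catr (IH (ltnW hk)) vs) _.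
have pos : 0 < M - k by lia.
have := desc_seg k pos; rewrite subnK => [e|]; last exact: ltnW.
rewrite (_ : (M - k.+1).+1 = M - k); last by lia.
rewrite bpowSr -!catA; apply: braid_eq_catl e _.
by apply/valid_bpow/valid_seg; lia.
Qed.

Lemma bpow_desc_seg q : braid_eq q (bpow (desc 1 q.-1) q) (bpow (seg q) q).
Proof.
elim: q => [|q IH]; first exact: be_refl.
case: q IH => [|q] IH; first exact: be_refl.
set d := desc 1 q.+1.
have I := bpow_segS (leqnn q.+1) (ltn0Sn q); rewrite subnn -/d in I.
have R := braid_eq_rev I.
rewrite rev_cat !rev_bpow /desc revK -/(desc 1 q.+1) -/d in R.
have vd : valid q.+2 d by apply: valid_desc => //; lia.
have vs : valid q.+2 (seg q.+2) by apply: valid_seg.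
rewrite bpowSr; apply: be_trans (braid_eq_catr R vd) _.
rewrite -catA [bpow (seg _) _]bpowS; apply: braid_eq_catl vs.
apply: be_trans (braid_eq_catr (braid_eq_widen (leqnSn _) IH) vd) _.
exact: be_sym I.
Qed.

Lemma desc_pow_conj n b L j : 0 < b -> b + L < n ->
  braid_eq n (desc b L.+1 ++ bpow (desc b.+1 L) j) (bpow (desc b L) j ++ desc b L.+1).
Proof.
move=> hb hn; have vD : valid n (desc b L.+1) by apply: valid_desc => //; lia.
have vd : valid n (desc b L) by apply: valid_desc => //; lia.
have conj1 : braid_eq n (desc b L.+1 ++ desc b.+1 L) (desc b L ++ desc b L.+1).
  have e := asc_conj hb hn (positive_asc b L) (within_asc b L).
  by rewrite shiftw_asc addn1 in e; have := braid_eq_rev e; rewrite !rev_cat; apply: be_sym.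
elim: j => [|j IH]; first by rewrite /= cats0; apply: be_refl.
have vd' : valid n (bpow (desc b.+1 L) j) by apply/valid_bpow/valid_desc; lia.
rewrite bpowS catA; apply: be_trans (braid_eq_catr conj1 vd') _.
by rewrite -catA [bpow (desc b L) _]bpowS -catA; apply: braid_eq_catl.
Qed.

(* Conjugate [c] to the front, then destabilise. *)
Lemma markov_destab_conj M X c : 0 < M -> valid M X -> valid M c ->
  markov M.+1 (X ++ (M, true) :: c) M (X ++ c).
Proof.
move=> hM hX hc.
have vXc : valid M (c ++ X) by rewrite valid_cat hc hX.
rewrite -cat_rcons; apply: mk_trans (mk_conj _) _.
  rewrite -cats1 !valid_cat (valid_widen _ hX) ?(valid_widen _ hc) // /valid /=; lia.
rewrite -rcons_cat; apply: mk_trans (mk_sym (mk_stab true hM vXc)) _.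
exact: mk_conj.
Qed.

(* [tail_desc q M] is [sigma_(M-1) ... sigma_(M-q+1)]; its [q]-th power is the full
   twist on the top [q] strands of [B_M]. *)
Definition tail_desc (q M : nat) : bword := desc (M - q).+1 q.-1.

Lemma seg_pow_tail q M j : 0 < q <= M ->
  braid_eq M.+1 (bpow (seg M.+1) q ++ bpow (tail_desc q M.+1) j)
                (bpow (seg M) q ++ bpow (tail_desc q M) j ++ (M, true) :: tail_desc q M).
Proof.
case/andP=> hq hqM; set b := (M - q).+1; set L := q.-1.
have eL : q = L.+1 by rewrite /L; lia.
have -> : tail_desc q M.+1 = desc b.+1 L by rewrite /tail_desc /b /L; congr desc; lia.
have -> : (M, true) :: tail_desc q M = desc b L.+1.
  by rewrite descS; congr ((_, _) :: _); rewrite /b /L; lia.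
have vd : valid M.+1 (bpow (desc b.+1 L) j) by apply/valid_bpow/valid_desc; lia.
have e := bpow_segS hqM (leq_trans hq hqM).
apply: be_trans (braid_eq_catr e vd) _.
rewrite -catA -/b [in desc b q]eL; apply: braid_eq_catl; first by apply: desc_pow_conj; lia.
by apply/valid_bpow/valid_seg.
Qed.

Lemma markov_seg_pow_destab q M W j : 0 < q <= M -> valid M W ->
  markov M.+1 (W ++ bpow (seg M.+1) q ++ bpow (tail_desc q M.+1) j)
         M (W ++ bpow (seg M) q ++ bpow (tail_desc q M) j.+1).
Proof.
move=> /andP[hq hqM] hW; have hM : 0 < M by lia.
have vt : valid M (tail_desc q M) by apply: valid_desc; lia.
have vX : valid M (W ++ bpow (seg M) q ++ bpow (tail_desc q M) j).
  by rewrite !valid_cat hW !valid_bpow ?valid_seg.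
apply: mk_trans (markov_braid_eq (braid_eq_catl (seg_pow_tail j _) _)) _.
- by rewrite hq.
- exact: valid_widen hW.
by have := markov_destab_conj hM vX vt; rewrite bpowSr -!catA.
Qed.

Lemma markov_seg_pow_reduce q N W : 0 < q <= N -> valid N W ->
  markov (N + q) (W ++ bpow (seg (N + q)) q)
         N (W ++ bpow (seg N) q ++ bpow (tail_desc q N) q).
Proof.
move=> hqN hW.
suff H d : d <= q -> markov (N + q) (W ++ bpow (seg (N + q)) q)
  (N + q - d) (W ++ bpow (seg (N + q - d)) q ++ bpow (tail_desc q (N + q - d)) d).
  by have := H q (leqnn q); rewrite addnK.
elim: d => [|d IH] hd; first by rewrite subn0 /= cats0; apply: mk_refl.
apply: mk_trans (IH (ltnW hd)) _.
rewrite (_ : N + q - d = (N + q - d.+1).+1); last by lia.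
by apply: markov_seg_pow_destab; [lia | apply: valid_widen hW; lia].
Qed.

(* Conjugate the far block [shiftw q Y] past [g] and slide it through [[1,N]^q],
   which lowers every index by [q]. *)
Lemma markov_seg_pow_shift N q g Y : 0 < q < N -> valid q g -> positive Y ->
  within 1 (N.-1 - q) Y ->
  markov N (g ++ bpow (seg N) q ++ shiftw q Y) N (g ++ bpow (seg N) q ++ Y).
Proof.
move=> /andP[hq hqN] hg pY iY; set P := bpow (seg N) q.
have iZ := within_shiftw q iY.
have vP : valid N P by apply/valid_bpow/valid_seg.
have vg : valid N g by apply: valid_widen hg; lia.
have vZ : valid N (shiftw q Y) by apply: valid_within iZ; lia.
rewrite catA; apply: mk_trans (mk_conj _) _; first by rewrite !valid_cat vg vP vZ.
have e1 : braid_eq N ((shiftw q Y ++ g) ++ P) ((g ++ shiftw q Y) ++ P).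
  apply: braid_eq_catr vP; apply: far_commute_words => //.
  apply: far_within iZ (_ : within 0 q.-1 g) _; last by apply/orP; right; lia.
  by apply: sub_all hg => x /andP[a b]; apply/andP; lia.
have e2 : braid_eq N (P ++ Y) (shiftw q Y ++ P).
  rewrite /P seg_asc (_ : N.-1 = (N - 2).+1); last by lia.
  by apply: asc_pow_conj => //; [lia | apply: sub_all iY => x /andP[a b]; apply/andP; lia].
rewrite -!catA in e1; apply: markov_braid_eq (be_trans e1 (be_sym _)).
exact: braid_eq_catl e2 vg.
Qed.

Definition full_twist (q : nat) : bword := bpow (desc 1 q.-1) q.

Lemma markov_full_twist_shift_down N q g t : 0 < q -> valid q g -> t.+1 * q <= N ->
  markov N (g ++ bpow (seg N) q ++ shiftw (t * q) (full_twist q))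
         N (g ++ bpow (seg N) q ++ full_twist q).
Proof.
move=> hq hg; elim: t => [|t IH] ht; first by rewrite mul0n shiftw0; apply: mk_refl.
have iX : within 1 q.-1 (full_twist q).
  by apply: within_bpow; have := within_desc 1 q.-1; rewrite add1n.
apply: mk_trans (IH _); last by rewrite mulSn in ht *; lia.
rewrite mulSn addnC -shiftwD; apply: markov_seg_pow_shift => //.
- by apply/andP; rewrite mulSn in ht; lia.
- by rewrite positive_shiftw; apply/positive_bpow/positive_desc.
- by have := within_shiftw (t * q) iX; apply: sub_all => x /andP[a b]; apply/andP;
    rewrite !mulSn in ht; lia.
Qed.

Lemma tail_desc_pow q N : bpow (tail_desc q N) q = shiftw (N - q) (full_twist q).
Proof. by rewrite /full_twist shiftw_bpow shiftw_desc add1n. Qed.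

Lemma markov_seg_pow_swap q k g : 0 < q -> valid q g ->
  markov (k.+1 * q) (g ++ bpow (seg (k.+1 * q)) q) q (g ++ bpow (seg q) (k.+1 * q)).
Proof.
move=> hq; elim: k g => [|k IH] g hg; first by rewrite mul1n; apply: mk_refl.
set N := k.+1 * q; rewrite (mulSn k.+1) addnC -/N.
have hqN : q <= N by rewrite /N mulSn leq_addr.
have vgN : valid N g by apply: valid_widen hg.
have vD : valid q (bpow (seg q) q) by apply/valid_bpow/valid_seg.
have vP : valid N (bpow (seg N) q) by apply/valid_bpow/valid_seg.
apply: mk_trans (markov_seg_pow_reduce _ vgN) _; first by rewrite hq.
rewrite tail_desc_pow (_ : N - q = k * q); last by rewrite /N mulSn addKn.
apply: mk_trans (markov_full_twist_shift_down (N := N) (t := k) hq hg (leqnn _)) _.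
apply: mk_trans (markov_braid_eq (braid_eq_catl _ vgN)) _.
- apply: (braid_eq_catl (x := bpow (seg N) q)) vP.
  exact: braid_eq_widen hqN (bpow_desc_seg q).
rewrite catA; apply: mk_trans (mk_conj _) _; first by rewrite !valid_cat vgN vP (valid_widen hqN).
rewrite catA; apply: mk_trans (IH _ _) _; first by rewrite valid_cat vD hg.
rewrite -catA; apply: mk_trans (mk_conj _) _; first by rewrite !valid_cat hg !valid_bpow ?valid_seg.
by rewrite -catA -bpowD; apply: mk_refl.
Qed.

Lemma markov_seg_pow_dvd s r g : 0 < s <= r -> s %| r -> valid s g ->
  markov r (g ++ bpow (seg r) s) s (g ++ bpow (seg s) r).
Proof.
case/andP=> hs hsr /dvdnP[[|k] er] hg; rewrite er in hsr *.
  by rewrite mul0n leqNgt hs in hsr.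
exact: markov_seg_pow_swap.
Qed.

Lemma sorted_leq_last (s : seq nat) : sorted leq s -> all (leq^~ (last 0 s)) s.
Proof.
case/lastP: s => [|s x] //; rewrite last_rcons all_rcons leqnn -rev_sorted rev_rcons /=.
by move/(order_path_min (fun _ _ _ h1 h2 => leq_trans h2 h1)); rewrite all_rev.
Qed.

Lemma valid_Tword n L : all (fun p : nat * nat => p.1 <= n) L -> valid n (Tword L).
Proof.
elim: L => [|p L IH] //= /andP[h hL].
by rewrite valid_cat IH // andbT; apply/valid_bpow/valid_seg.
Qed.

Lemma valid_Tword_Tstrands L : sorted leq [seq p.1 | p <- L] -> valid (Tstrands L) (Tword L).
Proof. by move/sorted_leq_last; rewrite all_map; apply: valid_Tword. Qed.

Lemma Tword_rcons L p : Tword (rcons L p) = Tword L ++ bpow (seg p.1) p.2.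
Proof. by rewrite /Tword map_rcons flatten_rcons. Qed.

Lemma Tstrands_rcons L p : Tstrands (rcons L p) = p.1.
Proof. by rewrite /Tstrands map_rcons last_rcons. Qed.

Theorem corollary3p2 :
  (forall (a s r : nat) (gamma : bword),
      (0 < a)%N -> (a <= s)%N -> (s <= r)%N -> (s %| r)%N -> valid a gamma ->
      markov r (gamma ++ bpow (seg r) s) s (gamma ++ bpow (seg s) r))
  /\
  (forall (L : seq (nat * nat)) (rk sk : nat),
      Tdata (rcons L (rk, sk)) ->
      (Tstrands L <= sk)%N -> (sk <= rk)%N -> (sk %| rk)%N ->
      markov (Tstrands (rcons L (rk, sk))) (Tword (rcons L (rk, sk)))
             (Tstrands (rcons L (sk, rk))) (Tword (rcons L (sk, rk)))).
Proof.
split=> [a s r g ha has hsr hdvd hg | L rk sk /and3P[_ sortedL hL] hLs hsr hdvd].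
  apply: markov_seg_pow_dvd => //; last exact: valid_widen hg.
  by rewrite (leq_trans ha has).
rewrite !Tstrands_rcons !Tword_rcons /=.
have hsk : 0 < sk by move: hL; rewrite all_rcons => /andP[/andP[_ ->]].
apply: markov_seg_pow_dvd; rewrite ?hsk //.
apply: valid_widen hLs _; apply: valid_Tword_Tstrands.
by move: sortedL; rewrite map_rcons; apply/subseq_sorted/subseq_rcons/leq_trans.
Qed.
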